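(* The automorphism group $\mathrm{Aut}_{\mathbf{Z}(\mathbb{M})}(E,e)$ of the tensor unit of the Drinfeld center of the bicategory $\mathbb{M}$ of rings and bimodules is cyclic of order $2$, consisting of the families $(1_A)_A$ and $(-1_A)_A$ acting on the bimodules $A$.
   Context: $\mathbb{M}$ is the bicategory whose objects are associative unital rings, with $\mathbb{M}(A,B)$ the category of $(B,A)$-bimodules, horizontal composition the tensor product over the middle ring, and identity 1-morphism the $(A,A)$-bimodule $A$. The Drinfeld center $\mathbf{Z}(\mathbb{B})$ of a bicategory has objects $(P,p)$ with $P(x)\in\mathbb{B}(x,x)$ and natural isomorphisms $p(M)\colon P(y)\otimes M\to M\otimes P(x)$ ($M\in\mathbb{B}(x,y)$), unital and satisfying $p(M\otimes N)=(\mathrm{id}(M)\otimes p(N))(p(M)\otimes\mathrm{id}(N))$; morphisms are families $f(x)\colon P(x)\to Q(x)$ compatible with $p,q$. The tensor unit is $(E,e)$ with $E(A)=A$ and $e$ given by the canonical isomorphisms $A'\otimes_{A'}N\cong N\cong N\otimes_A A$. *)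

From HB Require Import structures.
From mathcomp Require Import all_boot all_algebra.
Set Implicit Arguments. Unset Strict Implicit. Unset Printing Implicit Defensive.
Import GRing.Theory.
Local Open Scope ring_scope.

(* Associative unital rings (the zero ring allowed): pzRingType. *)
Record bimod (B A : pzRingType) := Bimod {
  bm_car :> zmodType;
  bm_l : B -> bm_car -> bm_car;
  bm_r : bm_car -> A -> bm_car;
  bm_lD : forall b m m', bm_l b (m + m') = bm_l b m + bm_l b m';
  bm_Dl : forall b b' m, bm_l (b + b') m = bm_l b m + bm_l b' m;
  bm_lM : forall b b' m, bm_l (b * b') m = bm_l b (bm_l b' m);
  bm_l1 : forall m, bm_l 1 m = m;
  bm_rD : forall m m' a, bm_r (m + m') a = bm_r m a + bm_r m' a;
  bm_Dr : forall m a a', bm_r m (a + a') = bm_r m a + bm_r m a';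
  bm_rM : forall m a a', bm_r m (a * a') = bm_r (bm_r m a) a';
  bm_r1 : forall m, bm_r m 1 = m;
  bm_lr : forall b m a, bm_r (bm_l b m) a = bm_l b (bm_r m a)
}.

Definition bimod_endo (A : pzRingType) (g : A -> A) : Prop :=
  (forall x y, g (x + y) = g x + g y) /\
  (forall a x c, g (a * x * c) = a * g x * c).

(* For M a (B,A)-bimodule, compatibility
   e(M) o (f(B) (x) id_M) = (id_M (x) f(A)) o e(M) : B (x)_B M -> M (x)_A A,
   transported along the canonical isomorphisms B (x)_B M ~ M ~ M (x)_A A
   (b(x)m |-> b.m, m(x)a |-> m.a) and evaluated on generators b (x) m, reads
   f(B)(b).m = (b.m).f(A)(1). *)
Definition center_unit_hom (f : forall A : pzRingType, A -> A) : Prop :=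
  (forall A : pzRingType, bimod_endo (f A)) /\
  (forall (B A : pzRingType) (M : bimod B A) (b : B) (m : M),
      @bm_l B A M (f B b) m = @bm_r B A M (@bm_l B A M b m) (f A 1)).

Definition center_unit_aut (f : forall A : pzRingType, A -> A) : Prop :=
  center_unit_hom f /\
  exists g : forall A : pzRingType, A -> A,
    center_unit_hom g /\
    (forall (A : pzRingType) (x : A), g A (f A x) = x) /\
    (forall (A : pzRingType) (x : A), f A (g A x) = x).

From HB Require Import structures.
From mathcomp Require Import all_boot all_algebra.
Import GRing.Theory.
Local Open Scope ring_scope.

(* Every ring A is an (A, Z)-bimodule, and compatibility of an endomorphism f
   of the unit with this bimodule forces f(A)(1) = f(Z)(1) . 1; as f(A) is an
   (A, A)-bimodule map, f(A) is multiplication by the integer u = f(Z)(1).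
   Conversely multiplication by any integer is compatible with every bimodule,
   so the endomorphism monoid of the unit is Z, and its automorphisms are the
   units 1 and -1 of Z. *)

Lemma additive_mulrz {U V : zmodType} (h : U -> V) :
  {morph h : x y / x + y} -> forall n, {morph h : x / x *~ n}.
Proof.
move=> hD n x.
have h0 : h 0 = 0 by apply: (@addrI _ (h 0)); rewrite -hD !addr0.
exact: (raddfMz (HB.pack h (GRing.isNmodMorphism.Build U V h (h0, hD)))).
Qed.

Definition regular_int_bimod (A : pzRingType) : bimod A int.
Proof.
refine (@Bimod A int A (fun b m => b * m) (fun m a => m *~ a)
          _ _ _ _ _ _ _ _ _) => *.
- exact: mulrDr.
- exact: mulrDl.
- exact/esym/mulrA.
- exact: mul1r.
- exact: mulrzDl.
- exact: mulrzDr.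
- exact: mulrzA.
- exact: mulr1z.
- exact/esym/mulrzAr.
Defined.

Lemma center_unit_hom_mulrz {f} {u : int} :
  (forall (A : pzRingType) (x : A), f A x = x *~ u) -> center_unit_hom f.
Proof.
move=> fE; split=> [A | B A M b m].
  by split=> [x y | a x c]; rewrite !fE ?mulrzDl // mulrzAr mulrzAl.
rewrite !fE (additive_mulrz (fun b => bm_l b m) (fun b b' => bm_Dl b b' m)).
by rewrite (additive_mulrz (bm_r (bm_l b m)) (@bm_Dr _ _ M _)) bm_r1.
Qed.

Lemma center_unit_hom_mulrzE {f} :
  center_unit_hom f -> forall (A : pzRingType) (x : A), f A x = x *~ f int 1.
Proof.
move=> [f_endo f_compat] A x.
have f1 : f A 1 = (f int 1)%:~R.
  by have /= := f_compat A int (regular_int_bimod A) 1 1; rewrite !mulr1.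
have [_ fM] := f_endo A.
by rewrite -[x in LHS]mulr1 -[x * 1 in LHS]mulr1 fM f1 mulr1 mulrzr.
Qed.

Lemma int_mul_eq1 (u v : int) : u * v = 1 -> u = 1 \/ u = -1.
Proof.
move=> uv; have : u \is a GRing.unit by apply/unitrPr; exists v.
by rewrite qualifE /= => /orP[/eqP|/eqP]; [left|right].
Qed.

Lemma center_unit_autP f :
  center_unit_aut f <->
  exists2 u : int, u = 1 \/ u = -1 & forall (A : pzRingType) (x : A), f A x = x *~ u.
Proof.
split=> [[f_hom [g [g_hom [gfK _]]]] | [u u_unit fE]].
  have fE := center_unit_hom_mulrzE f_hom; have gE := center_unit_hom_mulrzE g_hom.
  exists (f int 1) => //; apply: (@int_mul_eq1 _ (g int 1)).
  by have := gfK int 1; rewrite gE mulrzz.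
have uu : u * u = 1 by case: u_unit => ->; rewrite ?mulrNN mulr1.
have ffK (A : pzRingType) (x : A) : f A (f A x) = x by rewrite !fE -mulrzA uu mulr1z.
have f_hom := center_unit_hom_mulrz fE.
by split=> //; exists f.
Qed.

Theorem proposition6p2 :
  (forall f : forall A : pzRingType, A -> A,
      center_unit_aut f <->
      ((forall (A : pzRingType) (x : A), f A x = x) \/
       (forall (A : pzRingType) (x : A), f A x = - x))) /\
  ~ (forall (A : pzRingType) (x : A), x = - x).
Proof.
split=> [f | one_eq_opp]; last by have := one_eq_opp int 1.
apply: (iff_trans (center_unit_autP f)); split=> [[u [->|->] fE] | [fE|fE]].
- by left=> A x; rewrite fE mulr1z.
- by right=> A x; rewrite fE mulrN1z.
- by exists 1; [left | move=> A x; rewrite fE mulr1z].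
- by exists (-1); [right | move=> A x; rewrite fE mulrN1z].
Qed.
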